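(* Let $E,F$ be effect algebras, $(B,v)$ a unital Abelian po-group, and $h\colon(\mathrm{Gr}(E),u)\to(B,v)$ a morphism of unital po-groups, and put $\bar h=\Gamma(h)\circ\eta_E\colon E\to\Gamma(B,v)$. Then there exist isomorphisms $$\mathrm{Gr}(E)\otimes\mathrm{Gr}(F)\cong\mathrm{Gr}(E\otimes F)$$ (of unital Abelian po-groups) and $$[E,\Gamma(B,v)]_{\bar h}\cong\Gamma([\mathrm{Gr}(E),B],h)$$ (of effect algebras).
   Context: Effect algebras $(E;\oplus,',0,1)$: $\oplus$ commutative and associative (Kleene identities), $a\oplus b=1$ iff $b=a'$, $a\oplus 1$ defined iff $a=0$. $E\otimes F$ is the tensor product of effect algebras (universal for bihomomorphisms: maps preserving existing orthosums in each variable with $(1,1)\mapsto1$). Unital Abelian po-groups $(A,u)$ have an order unit $u\ge0$ (every $x\le nu$ for some $n$); their tensor product is $(A\otimes B,u\otimes v)$ with the Abelian group tensor product and positive cone generated by $a\otimes b$, $a\in A^+,b\in B^+$. For $b\in B^+$, $\Gamma(B,b)=\{x:0\le x\le b\}$ is an effect algebra with $x\oplus y=x+y$ defined iff $x+y\le b$. $(\mathrm{Gr}(E),u)$ with $\eta_E\colon E\to\Gamma(\mathrm{Gr}(E),u)$ is the universal group of $E$: every effect algebra homomorphism $E\to\Gamma(B,w)$ is $\Gamma(g)\circ\eta_E$ for a unique order-preserving group homomorphism $g$ with $g(u)=w$. $[E,\Gamma(B,v)]_{\bar h}$ is the effect algebra of maps $f\colon E\to\Gamma(B,v)$ preserving $0$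 and existing orthosums with $f\le\bar h$ pointwise (pointwise sum, top $\bar h$). $[\mathrm{Gr}(E),B]$ is the group of group homomorphisms ordered by the cone of order-preserving ones, and $\Gamma([\mathrm{Gr}(E),B],h)$ is its interval $\{g:0\le g\le h\}$ as an effect algebra. *)

From HB Require Import structures.
From mathcomp Require Import all_boot all_order all_algebra.
Set Implicit Arguments. Unset Strict Implicit. Unset Printing Implicit Defensive.
Import GRing.Theory.
Local Open Scope ring_scope.

(* Partial algebras (E; ⊕, 0, 1); a ⊕ b = c is the relation pa_sum a b c *)
Record PA := {
  pa_car :> Type;
  pa_sum : pa_car -> pa_car -> pa_car -> Prop;
  pa_zero : pa_car;
  pa_one : pa_car }.

Arguments pa_sum {p} _ _ _.
Arguments pa_zero {p}.
Arguments pa_one {p}.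

Record is_EA (E : PA) : Prop := {
  ea_fun : forall a b c c' : E, pa_sum a b c -> pa_sum a b c' -> c = c';
  ea_comm : forall a b c : E, pa_sum a b c -> pa_sum b a c;
  ea_assocl : forall a b c d e : E, pa_sum a b d -> pa_sum d c e ->
     exists f, pa_sum b c f /\ pa_sum a f e;
  ea_assocr : forall a b c f e : E, pa_sum b c f -> pa_sum a f e ->
     exists d, pa_sum a b d /\ pa_sum d c e;
  ea_compl : forall a : E, exists! b, pa_sum a b pa_one;
  ea_zero_one : forall a : E, (exists c, pa_sum a pa_one c) <-> a = pa_zero }.

Record EA := { ea_pa :> PA; ea_ax : is_EA ea_pa }.

Definition ea_hom (E L : PA) (f : E -> L) : Prop :=
  f pa_one = pa_one /\
  forall a b c : E, pa_sum a b c -> pa_sum (f a) (f b) (f c).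

Definition ea_bihom (E F L : PA) (beta : E -> F -> L) : Prop :=
  beta pa_one pa_one = pa_one /\
  (forall (y : F) (a b c : E), pa_sum a b c ->
      pa_sum (beta a y) (beta b y) (beta c y)) /\
  (forall (x : E) (a b c : F), pa_sum a b c ->
      pa_sum (beta x a) (beta x b) (beta x c)).

Definition ea_iso (E L : PA) : Prop :=
  exists f : E -> L, bijective f /\ f pa_one = pa_one /\
    forall a b c : E, pa_sum a b c <-> pa_sum (f a) (f b) (f c).

Definition is_ea_tensor (E F T : EA) (tau : E -> F -> T) : Prop :=
  ea_bihom tau /\
  forall (L : EA) (beta : E -> F -> L), ea_bihom beta ->
    exists! phi : T -> L, ea_hom phi /\ forall x y, beta x y = phi (tau x y).

Record POG := {
  pog_car :> zmodType;
  pog_pos : pog_car -> Prop;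
  pog_pos0 : pog_pos 0;
  pog_posD : forall x y, pog_pos x -> pog_pos y -> pog_pos (x + y);
  pog_anti : forall x, pog_pos x -> pog_pos (- x) -> x = 0 }.

Arguments pog_pos {p} _.

Definition pog_le (G : POG) (x y : G) : Prop := pog_pos (y - x).

Record UPOG := {
  upog :> POG;
  ounit : upog;
  ounit_pos : pog_pos ounit;
  ounit_ou : forall x : upog, exists n : nat, pog_le x (ounit *+ n) }.

Arguments ounit {u}.

Definition zadditive (A C : zmodType) (f : A -> C) : Prop :=
  forall x y, f (x + y) = f x + f y.

Definition biadditive (A B C : zmodType) (t : A -> B -> C) : Prop :=
  (forall b, zadditive (fun a => t a b)) /\ (forall a, zadditive (t a)).

Definition po_hom (A C : POG) (f : A -> C) : Prop :=
  zadditive f /\ forall x, pog_pos x -> pog_pos (f x).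

Definition upog_hom (A C : UPOG) (f : A -> C) : Prop :=
  po_hom f /\ f ounit = ounit.

Definition upog_iso (A C : UPOG) : Prop :=
  exists f : A -> C, zadditive f /\ bijective f /\
    (forall x, pog_pos x <-> pog_pos (f x)) /\ f ounit = ounit.

Definition is_upog_tensor (A B T : UPOG) (t : A -> B -> T) : Prop :=
  biadditive t /\
  (forall (C : zmodType) (beta : A -> B -> C), biadditive beta ->
     exists! g : T -> C, zadditive g /\ forall a b, beta a b = g (t a b)) /\
  (forall x : T, pog_pos x <->
     exists s : seq (A * B),
       (forall i : nat, (i < size s)%N ->
          pog_pos (nth (0, 0) s i).1 /\ pog_pos (nth (0, 0) s i).2) /\
       x = \sum_(p <- s) t p.1 p.2) /\
  ounit = t ounit ounit.

Section Gamma.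
Variables (B : POG) (b : B) (hb : pog_pos b).

Definition gamma_car := {x : B | pog_pos x /\ pog_pos (b - x)}.

Lemma gamma_zero_proof : pog_pos (0 : B) /\ pog_pos (b - 0).
Proof. by rewrite subr0; split; [apply: pog_pos0 | exact: hb]. Qed.

Lemma gamma_one_proof : pog_pos b /\ pog_pos (b - b).
Proof. by rewrite subrr; split; [exact: hb | apply: pog_pos0]. Qed.

Definition Gamma : PA := {|
  pa_car := gamma_car;
  pa_sum := fun x y z => sval x + sval y = sval z;
  pa_zero := exist _ 0 gamma_zero_proof;
  pa_one := exist _ b gamma_one_proof |}.
End Gamma.

Definition GammaU (G : UPOG) : PA := Gamma (ounit_pos G).

Record is_universal_group (E : EA) (G : UPOG) (eta : E -> GammaU G) : Prop := {
  ug_hom : ea_hom eta;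
  ug_univ : forall (B : POG) (w : B) (hw : pog_pos w) (phi : E -> Gamma hw),
    ea_hom phi ->
    exists! g : G -> B, po_hom g /\ g ounit = w /\
      forall a, sval (phi a) = g (sval (eta a)) }.

Lemma ea_sum000 (E : EA) : pa_sum (pa_zero : E) pa_zero pa_zero.
Proof.
case: (ea_ax E) => _ Hc _ Har Hcomp Hz1.
have s01 : pa_sum (pa_zero : E) pa_one pa_one.
  case: (Hcomp pa_one) => z [Hz _].
  have := Hc _ _ _ Hz => Hz'.
  have z0 : z = pa_zero by apply/Hz1; exists pa_one.
  by rewrite -z0.
have [d [Hd Hd1]] := Har _ _ _ _ _ s01 s01.
have d0 : d = pa_zero by apply/Hz1; exists pa_one.
by rewrite d0 in Hd.
Qed.

Lemma zadd0 (A C : zmodType) (f : A -> C) : zadditive f -> f 0 = 0.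
Proof.
by move=> Hf; apply/(addrI (f 0)); rewrite -Hf !addr0.
Qed.

Lemma zaddB (A C : zmodType) (f : A -> C) x y : zadditive f -> f (x - y) = f x - f y.
Proof.
move=> Hf; apply/eqP; rewrite eq_sym subr_eq -Hf subrK //.
Qed.

Section Maps.
Variables (E : EA) (G B : UPOG) (eta : E -> GammaU G) (Heta : ea_hom eta)
  (h : G -> B) (hh : upog_hom h).

Definition hbar (a : E) : B := h (sval (eta a)).

Lemma eta_zero : sval (eta pa_zero) = 0.
Proof.
have /= E0 := (proj2 Heta) _ _ _ (ea_sum000 E).
by apply/(addrI (sval (eta pa_zero))); rewrite E0 addr0.
Qed.

Definition mapsP (f : E -> B) : Prop :=
  (forall a, pog_pos (f a) /\ pog_pos (ounit - f a) /\ pog_pos (hbar a - f a)) /\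
  f pa_zero = 0 /\
  (forall a b c : E, pa_sum a b c -> f a + f b = f c).

Lemma maps_zero_proof : mapsP (fun _ => 0).
Proof.
case: hh => [[hadd hpos] hu].
split; last by split=> // *; rewrite addr0.
move=> a; rewrite !subr0; split; first exact: pog_pos0.
split; first exact: ounit_pos.
by apply: hpos; case: (svalP (eta a)).
Qed.

Lemma maps_one_proof : mapsP hbar.
Proof.
case: hh => [[hadd hpos] hu].
split; [move=> a|split].
- rewrite subrr; case: (svalP (eta a)) => p1 p2.
  split; first exact: hpos.
  split; last exact: pog_pos0.
  by rewrite /hbar -hu -zaddB //; apply: hpos.
- by rewrite /hbar eta_zero zadd0.
- move=> a b c Habc; rewrite /hbar -hadd.
  by have /= <- := (proj2 Heta) _ _ _ Habc.
Qed.

(* [E, Γ(B, v)]_{\bar h} *)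
Definition EAmaps : PA := {|
  pa_car := {f : E -> B | mapsP f};
  pa_sum := fun f g k => forall a, sval f a + sval g a = sval k a;
  pa_zero := exist _ (fun _ => 0) maps_zero_proof;
  pa_one := exist _ hbar maps_one_proof |}.

(* Γ([Gr(E), B], h) : group homomorphisms g with 0 <= g <= h *)
Definition intervalP (g : G -> B) : Prop :=
  zadditive g /\ (forall x, pog_pos x -> pog_pos (g x)) /\
  (forall x, pog_pos x -> pog_pos (h x - g x)).

Lemma interval_zero_proof : intervalP (fun _ => 0).
Proof.
case: hh => [[hadd hpos] hu].
split; first by move=> *; rewrite addr0.
split=> x Hx; last by rewrite subr0; apply: hpos.
exact: pog_pos0.
Qed.

Lemma interval_one_proof : intervalP h.
Proof.
case: hh => [[hadd hpos] hu].
split=> //; split=> // x _; rewrite subrr; exact: pog_pos0.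
Qed.

Definition GammaHom : PA := {|
  pa_car := {g : G -> B | intervalP g};
  pa_sum := fun f g k => forall x, sval f x + sval g x = sval k x;
  pa_zero := exist _ (fun _ => 0) interval_zero_proof;
  pa_one := exist _ h interval_one_proof |}.
End Maps.

(* Both isomorphisms rest on the universal property of Gr: a positive map on
   an effect algebra E that preserves orthosums extends uniquely to a positive
   group homomorphism on Gr(E), and every positive element of Gr(E) is a sum of
   images of E, so homomorphisms agreeing on E agree everywhere.
   Extending (a, b) |-> eta(a ⊗ b) in a, then in b on positive elements, then
   to all of Gr(E) by differences gives a positive biadditive map
   Gr(E) × Gr(F) -> Gr(E ⊗ F), hence a unital morphism from Gr(E) ⊗ Gr(F).
   Conversely 0 <= eta a ⊗ eta b <= u ⊗ v, so (a, b) |-> eta a ⊗ eta b is a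
   bimorphism into Γ(Gr(E) ⊗ Gr(F)) and induces a morphism back from
   Gr(E ⊗ F). Both composites fix generators, so they are identities.
   The second isomorphism sends f to its extension to Gr(E); its inverse is
   g |-> g ∘ eta. *)

From HB Require Import structures.
From mathcomp Require Import all_boot all_order all_algebra.
From Stdlib Require Import ClassicalEpsilon FunctionalExtensionality ProofIrrelevance.

Set Implicit Arguments. Unset Strict Implicit. Unset Printing Implicit Defensive.
Import GRing.Theory.
Local Open Scope ring_scope.

Lemma sval_inj (A : Type) (P : A -> Prop) : injective (@proj1_sig A P).
Proof. by apply: eq_sig_hprop => x p q; apply: proof_irrelevance. Qed.

Definition ea_additive (E : PA) (C : zmodType) (f : E -> C) : Prop :=
  forall a b c : E, pa_sum a b c -> f a + f b = f c.

Lemma eqr_sub (V : zmodType) (a b c d : V) : (a - b == c - d) = (a + d == c + b).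
Proof. by rewrite subr_eq addrAC eq_sym subr_eq eq_sym. Qed.

Lemma pog_pos_sum (G : POG) (I : Type) (s : seq I) (F : I -> G) :
  (forall i, pog_pos (F i)) -> pog_pos (\sum_(i <- s) F i).
Proof.
move=> F_pos; elim: s => [|i s IHs]; first by rewrite big_nil; apply: pog_pos0.
by rewrite big_cons; apply: pog_posD.
Qed.

Lemma pog_pos_muln (G : POG) (x : G) n : pog_pos x -> pog_pos (x *+ n).
Proof.
move=> x_pos; elim: n => [|n IHn]; first by rewrite mulr0n; apply: pog_pos0.
by rewrite mulrS; apply: pog_posD.
Qed.

Lemma zadditive_sum (A C : zmodType) (f : A -> C) (I : Type) (s : seq I) (F : I -> A) :
  zadditive f -> f (\sum_(i <- s) F i) = \sum_(i <- s) f (F i).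
Proof.
move=> f_add; elim: s => [|i s IHs]; first by rewrite !big_nil zadd0.
by rewrite !big_cons f_add IHs.
Qed.

Lemma upog_decomp (G : UPOG) (x : G) :
  exists p q : G, pog_pos p /\ pog_pos q /\ x = p - q.
Proof.
have [n x_le] := ounit_ou x.
exists (ounit *+ n), (ounit *+ n - x); split; first exact/pog_pos_muln/ounit_pos.
by split=> //; rewrite opprB addrC subrK.
Qed.

Lemma Gamma_EA (B : POG) (b : B) (hb : pog_pos b) : is_EA (Gamma hb).
Proof.
pose mk z (z_pos : pog_pos z) (z_le : pog_pos (b - z)) : Gamma hb :=
  exist _ z (conj z_pos z_le).
split.
- by move=> x y c c' /= xy_c xy_c'; apply: sval_inj; rewrite -xy_c.
- by move=> x y c /=; rewrite addrC.
- move=> x y c d e /= xy_d dc_e.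
  have yc_le : pog_pos (b - (sval y + sval c)).
    have -> : b - (sval y + sval c) = (b - sval e) + sval x.
      by rewrite -dc_e -xy_d -(addrA (sval x)) [in RHS]opprD addrA addrAC subrK.
    by apply: pog_posD; [case: (svalP e) | case: (svalP x)].
  have yc_pos : pog_pos (sval y + sval c).
    by apply: pog_posD; [case: (svalP y) | case: (svalP c)].
  by exists (mk _ yc_pos yc_le); rewrite /= addrA xy_d.
- move=> x y c f e /= yc_f xf_e.
  have xy_le : pog_pos (b - (sval x + sval y)).
    have -> : b - (sval x + sval y) = (b - sval e) + sval c.
      by rewrite -xf_e -yc_f [in RHS]addrA [in RHS]opprD addrA subrK.
    by apply: pog_posD; [case: (svalP e) | case: (svalP c)].
  have xy_pos : pog_pos (sval x + sval y).
    by apply: pog_posD; [case: (svalP x) | case: (svalP y)].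
  by exists (mk _ xy_pos xy_le); rewrite /= -addrA yc_f.
- move=> x; have [x_pos x_le] := svalP x.
  have cx_le : pog_pos (b - (b - sval x)) by rewrite opprB addrC subrK.
  exists (mk _ x_le cx_le); split=> [|y /= xy_b]; first by rewrite /= addrC subrK.
  by apply: sval_inj; apply/eqP; rewrite /= subr_eq addrC xy_b.
- move=> x; split=> [[c /= xb_c]|->]; last by exists pa_one; rewrite /= add0r.
  apply: sval_inj; apply: pog_anti; first by case: (svalP x).
  have -> : - sval x = b - sval c by rewrite -xb_c opprD addrA addrAC subrr add0r.
  by case: (svalP c).
Qed.

Definition GammaEA (B : POG) (b : B) (hb : pog_pos b) : EA := Build_EA (Gamma_EA hb).

Section UniversalGroup.
Variables (E : EA) (G : UPOG) (eta : E -> GammaU G) (HE : is_universal_group eta).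

Lemma eta_pos a : pog_pos (sval (eta a)).
Proof. by case: (svalP (eta a)). Qed.

Lemma eta_one : sval (eta pa_one) = ounit.
Proof. by case: (ug_hom HE) => ->. Qed.

Lemma eta_additive : ea_additive (fun a => sval (eta a)).
Proof. by case: (ug_hom HE) => _; apply. Qed.

Definition ug_lift (C : POG) (f : E -> C) : G -> C :=
  epsilon (inhabits (fun=> 0))
    (fun g => po_hom g /\ forall a, g (sval (eta a)) = f a).

Lemma ug_liftP (C : POG) (f : E -> C) :
  (forall a, pog_pos (f a)) -> ea_additive f ->
  po_hom (ug_lift f) /\ forall a, ug_lift f (sval (eta a)) = f a.
Proof.
move=> f_pos f_add; rewrite /ug_lift; set P := (X in epsilon _ X); apply: (epsilon_spec _ P).
have f_le a : pog_pos (f pa_one - f a).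
  have [a' [aa'_1 _]] := ea_compl (ea_ax E) a.
  by rewrite -(f_add _ _ _ aa'_1) addrC addKr.
pose phi a : Gamma (f_pos pa_one) := exist _ (f a) (conj (f_pos a) (f_le a)).
have phi_hom : ea_hom phi by split=> [|a b c /f_add]; first exact: sval_inj.
have [g [[g_po [_ g_eta]] _]] := ug_univ HE phi_hom.
by exists g; split=> // a; rewrite -g_eta.
Qed.

(* Lift [eta] into [G] reordered by the cone generated by the image of [eta]:
   by uniqueness the lift is the identity, so that cone is the whole positive cone. *)
Lemma ug_gen x : pog_pos x -> exists s : seq E, x = \sum_(a <- s) sval (eta a).
Proof.
move=> x_pos; pose P y := exists s : seq E, y = \sum_(a <- s) sval (eta a).
have P0 : P 0 by exists [::]; rewrite big_nil.
have PD y z : P y -> P z -> P (y + z).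
  by move=> [s ->] [s' ->]; exists (s ++ s'); rewrite big_cat.
have P_pos y : P y -> pog_pos y.
  by move=> [s ->]; apply: pog_pos_sum => a; apply: eta_pos.
have P_anti y : P y -> P (- y) -> y = 0 by move=> /P_pos y_pos /P_pos; apply: pog_anti.
pose GP : POG := @Build_POG G P P0 PD P_anti.
have [[g_add g_pos] g_eta] := @ug_liftP GP (fun a => sval (eta a))
  (fun a => ex_intro _ [:: a] (esym (big_seq1 _ _ _))) eta_additive.
have [g0 [_ g0_uniq]] := ug_univ HE (ug_hom HE).
have g0_id : g0 = id by apply: g0_uniq.
have g0_g : g0 = @ug_lift GP (fun a => sval (eta a)).
  apply: (g0_uniq (@ug_lift GP _)); split; first by split=> // y /g_pos /P_pos.
  by split=> [|a]; [move: (g_eta pa_one); rewrite eta_one | rewrite g_eta].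
by have := g_pos _ x_pos; rewrite -g0_g g0_id.
Qed.

Lemma ug_pos (C : POG) (k : G -> C) : zadditive k ->
  (forall a, pog_pos (k (sval (eta a)))) -> forall x, pog_pos x -> pog_pos (k x).
Proof.
by move=> k_add k_pos x /ug_gen [s ->]; rewrite zadditive_sum //; apply: pog_pos_sum.
Qed.

Lemma ug_eq (C : zmodType) (k1 k2 : G -> C) : zadditive k1 -> zadditive k2 ->
  (forall a, k1 (sval (eta a)) = k2 (sval (eta a))) -> k1 =1 k2.
Proof.
move=> k1_add k2_add k12_eta.
have d_add : zadditive (fun x => k1 x - k2 x).
  by move=> x y; rewrite k1_add k2_add opprD addrACA.
have d_pos p : pog_pos p -> k1 p - k2 p = 0.
  move=> /ug_gen [s ->]; have /= -> := zadditive_sum s (fun a => sval (eta a)) d_add.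
  by apply: big1 => a _; rewrite k12_eta subrr.
move=> x; have [p [q [p_pos [q_pos ->]]]] := upog_decomp x.
apply/eqP; rewrite -subr_eq0; apply/eqP.
by have /= -> := zaddB p q d_add; rewrite !d_pos // subr0.
Qed.

End UniversalGroup.

Lemma ug_eq2 (E F : EA)
    (GE : UPOG) (etaE : E -> GammaU GE) (HE : is_universal_group etaE)
    (GF : UPOG) (etaF : F -> GammaU GF) (HF : is_universal_group etaF)
    (C : zmodType) (k1 k2 : GE -> GF -> C) : biadditive k1 -> biadditive k2 ->
  (forall a b, k1 (sval (etaE a)) (sval (etaF b)) = k2 (sval (etaE a)) (sval (etaF b))) ->
  forall x y, k1 x y = k2 x y.
Proof.
move=> [k1_addl k1_addr] [k2_addl k2_addr] k12_eta x y.
apply: (ug_eq HE (k1_addl y) (k2_addl y)) => a.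
exact: (ug_eq HF (k1_addr _) (k2_addr _)).
Qed.

Section ConeExtension.
Variables (G : UPOG) (C : zmodType) (k : G -> C).
Hypothesis k_addD : forall p q, pog_pos p -> pog_pos q -> k (p + q) = k p + k q.

Definition upog_split (x : G) : G * G :=
  epsilon (inhabits (0, 0)) (fun pq => pog_pos pq.1 /\ pog_pos pq.2 /\ x = pq.1 - pq.2).

Lemma upog_splitP x :
  pog_pos (upog_split x).1 /\ pog_pos (upog_split x).2 /\ x = (upog_split x).1 - (upog_split x).2.
Proof.
rewrite /upog_split; set P := (X in epsilon _ X); apply: (epsilon_spec _ P).
by have [p [q pq]] := upog_decomp x; exists (p, q).
Qed.

Definition cone_ext (x : G) : C := k (upog_split x).1 - k (upog_split x).2.

Lemma cone_ext_sub p q : pog_pos p -> pog_pos q -> cone_ext (p - q) = k p - k q.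
Proof.
move=> p_pos q_pos; have [p'_pos [q'_pos pq_p'q']] := upog_splitP (p - q).
rewrite /cone_ext; move: (upog_split _) p'_pos q'_pos pq_p'q' => [p' q'] /= p'_pos q'_pos.
move=> /eqP; rewrite eqr_sub => /eqP pq'_p'q.
by apply/eqP; rewrite eqr_sub -!k_addD // pq'_p'q.
Qed.

Lemma cone_ext_pos p : pog_pos p -> cone_ext p = k p.
Proof.
have k0 : k 0 = 0 by apply: (addrI (k 0)); rewrite -k_addD ?addr0 //; apply: pog_pos0.
by move=> p_pos; rewrite -[p]subr0 cone_ext_sub ?k0 ?subr0 //; apply: pog_pos0.
Qed.

Lemma cone_ext_additive : zadditive cone_ext.
Proof.
move=> x y; have [p [q [p_pos [q_pos ->]]]] := upog_decomp x.
have [p' [q' [p'_pos [q'_pos ->]]]] := upog_decomp y.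
rewrite addrACA -opprD !cone_ext_sub ?k_addD //; try exact: pog_posD.
by rewrite opprD addrACA.
Qed.

End ConeExtension.

Section BiadditiveLift.
Variables (E F : EA)
  (GE : UPOG) (etaE : E -> GammaU GE) (HE : is_universal_group etaE)
  (GF : UPOG) (etaF : F -> GammaU GF) (HF : is_universal_group etaF)
  (C : POG) (beta : E -> F -> C).
Hypotheses (beta_pos : forall a b, pog_pos (beta a b))
  (beta_addl : forall b, ea_additive (beta^~ b))
  (beta_addr : forall a, ea_additive (beta a)).

Let lift_l (b : F) : GE -> C := ug_lift etaE (beta^~ b).

Let lift_lP b : po_hom (lift_l b) /\ forall a, lift_l b (sval (etaE a)) = beta a b.
Proof. exact: ug_liftP. Qed.

Let lift_l_additive x : ea_additive (fun b => lift_l b x).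
Proof.
move=> b1 b2 b3 b12_3.
have [[add1 _] eta1] := lift_lP b1; have [[add2 _] eta2] := lift_lP b2.
have [[add3 _] eta3] := lift_lP b3.
apply: (ug_eq HE (k1 := fun x => lift_l b1 x + lift_l b2 x)) => // [y z|a].
  by rewrite add1 add2 addrACA.
by rewrite eta1 eta2 eta3; apply: beta_addr.
Qed.

Let lift_lr (x : GE) : GF -> C := ug_lift etaF (fun b => lift_l b x).

Let lift_lrP x : pog_pos x ->
  po_hom (lift_lr x) /\ forall b, lift_lr x (sval (etaF b)) = lift_l b x.
Proof.
move=> x_pos; apply: (ug_liftP HF _ (lift_l_additive x)) => b.
by have [[_ pos] _] := lift_lP b; apply: pos.
Qed.

Let lift_lrD p q y : pog_pos p -> pog_pos q ->
  lift_lr (p + q) y = lift_lr p y + lift_lr q y.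
Proof.
move=> p_pos q_pos; have pq_pos := pog_posD p_pos q_pos.
have [[addpq _] etapq] := lift_lrP pq_pos.
have [[addp _] etap] := lift_lrP p_pos; have [[addq _] etaq] := lift_lrP q_pos.
apply: (ug_eq HF (k2 := fun y => lift_lr p y + lift_lr q y)) => // [y1 y2|b].
  by rewrite addp addq addrACA.
by rewrite etapq etap etaq; have [[addb _] _] := lift_lP b; apply: addb.
Qed.

Definition ug_bilift (x : GE) (y : GF) : C := cone_ext (lift_lr^~ y) x.

Let ug_bilift_pos_l p y : pog_pos p -> ug_bilift p y = lift_lr p y.
Proof. by move=> p_pos; apply: (cone_ext_pos _ p_pos) => p' q'; apply: lift_lrD. Qed.

Lemma ug_bilift_biadditive : biadditive ug_bilift.
Proof.
split=> [y|x].
  by apply: cone_ext_additive => p q p_pos q_pos; apply: lift_lrD.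
have [p_pos [q_pos _]] := upog_splitP x.
have [[addp _] _] := lift_lrP p_pos; have [[addq _] _] := lift_lrP q_pos.
by move=> y1 y2; rewrite /ug_bilift /cone_ext addp addq opprD addrACA.
Qed.

Lemma ug_bilift_pos p q : pog_pos p -> pog_pos q -> pog_pos (ug_bilift p q).
Proof.
by move=> p_pos q_pos; rewrite ug_bilift_pos_l //; have [[_ pos] _] := lift_lrP p_pos; apply: pos.
Qed.

Lemma ug_bilift_eta a b : ug_bilift (sval (etaE a)) (sval (etaF b)) = beta a b.
Proof.
have a_pos := eta_pos etaE a; rewrite ug_bilift_pos_l //.
by have [_ ->] := lift_lrP a_pos; have [_ ->] := lift_lP b.
Qed.

End BiadditiveLift.

Lemma le_biadditive (A B C : POG) (t : A -> B -> C) : biadditive t ->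
    (forall p q, pog_pos p -> pog_pos q -> pog_pos (t p q)) ->
  forall x u y v, pog_pos x -> pog_le x u -> pog_pos y -> pog_le y v ->
  pog_le (t x y) (t u v).
Proof.
move=> [t_addl t_addr] t_pos x u y v x_pos x_le y_pos y_le.
have v_pos : pog_pos v by rewrite -(subrK y v); apply: pog_posD.
rewrite /pog_le; have -> : t u v - t x y = t (u - x) v + t x (v - y).
  by rewrite (zaddB _ _ (t_addl v)) (zaddB _ _ (t_addr x)) addrA subrK.
by apply: pog_posD; apply: t_pos.
Qed.

Section GammaMap.
Variables (A C : UPOG) (g : A -> C) (hg : upog_hom g).

Lemma gamma_map_proof (x : GammaU A) :
  pog_pos (g (sval x)) /\ pog_pos (ounit - g (sval x)).
Proof.
have [[g_add g_pos] g_one] := hg; have [x_pos x_le] := svalP x.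
by split; [|rewrite -g_one -zaddB //]; apply: g_pos.
Qed.

Definition gamma_map (x : GammaU A) : GammaU C := exist _ _ (gamma_map_proof x).

Lemma gamma_map_hom : ea_hom gamma_map.
Proof.
have [[g_add _] g_one] := hg.
by split=> [|x y z /= xy_z]; [apply: sval_inj | rewrite -g_add xy_z].
Qed.

End GammaMap.

Lemma ea_hom_comp (E L M : PA) (f : E -> L) (g : L -> M) :
  ea_hom f -> ea_hom g -> ea_hom (g \o f).
Proof. by move=> [f_one f_add] [g_one g_add]; split=> [|a b c /f_add /g_add]; rewrite /= ?f_one. Qed.

Lemma ea_tensor_hom_eq (E F T : EA) (tau : E -> F -> T) (L : EA) (phi1 phi2 : T -> L) :
  is_ea_tensor tau -> ea_hom phi1 -> ea_hom phi2 ->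
  (forall a b, phi1 (tau a b) = phi2 (tau a b)) -> phi1 = phi2.
Proof.
move=> [[tau_one [tau_addl tau_addr]] tau_univ] [phi1_one phi1_add] phi2_hom phi12.
have beta_bihom : ea_bihom (fun a b => phi1 (tau a b)).
  split; first by rewrite tau_one.
  by split=> [y|x] a b c /= abc; apply: phi1_add; [apply: tau_addl | apply: tau_addr].
have [phi [_ phi_uniq]] := tau_univ L _ beta_bihom.
by rewrite -(phi_uniq phi1) ?(phi_uniq phi2) //; split.
Qed.

Lemma upog_tensor_pos (A B T : UPOG) (t : A -> B -> T) : is_upog_tensor t ->
  forall p q, pog_pos p -> pog_pos q -> pog_pos (t p q).
Proof.
move=> [_ [_ [t_cone _]]] p q p_pos q_pos; apply/t_cone.
by exists [:: (p, q)]; rewrite big_seq1; split=> // [[]].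
Qed.

Lemma upog_tensor_hom_pos (A B T : UPOG) (t : A -> B -> T) (C : POG) (g : T -> C) :
  is_upog_tensor t -> zadditive g ->
  (forall p q, pog_pos p -> pog_pos q -> pog_pos (g (t p q))) ->
  forall x, pog_pos x -> pog_pos (g x).
Proof.
move=> [_ [_ [t_cone _]]] g_add gt_pos x /t_cone [s [s_pos ->]].
rewrite zadditive_sum //; elim: s s_pos => [|[p q] s IHs] s_pos.
  by rewrite big_nil; apply: pog_pos0.
rewrite big_cons; have [p_pos q_pos] := s_pos 0%N isT.
by apply: pog_posD; [apply: gt_pos | apply: IHs => i; apply: (s_pos i.+1)].
Qed.

Lemma upog_tensor_hom_eq (A B T : UPOG) (t : A -> B -> T) (C : zmodType) (g1 g2 : T -> C) :
  is_upog_tensor t -> zadditive g1 -> zadditive g2 ->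
  (forall x y, g1 (t x y) = g2 (t x y)) -> g1 =1 g2.
Proof.
move=> [[t_addl t_addr] [t_univ _]] g1_add g2_add g12.
have g1t_biadd : biadditive (fun x y => g1 (t x y)).
  by split=> [y|x] x1 x2; rewrite /= ?t_addl ?t_addr g1_add.
have [g [_ g_uniq]] := t_univ C _ g1t_biadd.
by move=> x; rewrite -(g_uniq g1) ?(g_uniq g2).
Qed.

Section TensorOfUniversalGroups.
Variables (E F : EA)
  (GrE : UPOG) (etaE : E -> GammaU GrE) (HE : is_universal_group etaE)
  (GrF : UPOG) (etaF : F -> GammaU GrF) (HF : is_universal_group etaF)
  (EF : EA) (tau : E -> F -> EF) (Htau : is_ea_tensor tau)
  (GrEF : UPOG) (etaEF : EF -> GammaU GrEF) (HEF : is_universal_group etaEF)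
  (T : UPOG) (t : GrE -> GrF -> T) (Ht : is_upog_tensor t).

Lemma tensor_Gr_bimorphism : exists beta : GrE -> GrF -> GrEF,
  [/\ biadditive beta, forall p q, pog_pos p -> pog_pos q -> pog_pos (beta p q)
    & forall a b, beta (sval (etaE a)) (sval (etaF b)) = sval (etaEF (tau a b))].
Proof.
have [_ [tau_addl tau_addr]] := proj1 Htau.
pose beta0 a b := sval (etaEF (tau a b)).
have beta0_pos a b : pog_pos (beta0 a b) := eta_pos etaEF _.
have beta0_addl b : ea_additive (beta0^~ b).
  by move=> a1 a2 a3 /(tau_addl b); apply: (eta_additive HEF).
have beta0_addr a : ea_additive (beta0 a).
  by move=> b1 b2 b3 /(tau_addr a); apply: (eta_additive HEF).
exists (ug_bilift etaE etaF beta0); split.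
- exact: ug_bilift_biadditive.
- exact: ug_bilift_pos.
- exact: ug_bilift_eta.
Qed.

Lemma Gr_tensor_to_tensor_Gr : exists psi : GrEF -> T, upog_hom psi /\
  forall a b, psi (sval (etaEF (tau a b))) = t (sval (etaE a)) (sval (etaF b)).
Proof.
have [[tau_one _] tau_univ] := Htau.
have [[t_addl t_addr] [_ [_ t_one]]] := Ht.
have t_Gamma a b : pog_pos (t (sval (etaE a)) (sval (etaF b))) /\
                   pog_pos (ounit - t (sval (etaE a)) (sval (etaF b))).
  have [a_pos a_le] := svalP (etaE a); have [b_pos b_le] := svalP (etaF b).
  split; first exact: upog_tensor_pos.
  by rewrite t_one; apply: (le_biadditive (conj t_addl t_addr) (upog_tensor_pos Ht)).
pose beta a b : GammaEA (ounit_pos T) := exist _ _ (t_Gamma a b).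
have beta_bihom : ea_bihom beta.
  split; first by apply: sval_inj; rewrite /= !eta_one.
  by split=> [y|x] a1 a2 a3 H; rewrite /= -?t_addl -?t_addr ?(eta_additive HE H) ?(eta_additive HF H).
have [phi [[[phi_one phi_add] phi_tau] _]] := tau_univ _ beta beta_bihom.
have [[psi_add psi_pos] psi_eta] := ug_liftP HEF (fun c => proj1 (svalP (phi c))) phi_add.
exists (ug_lift etaEF (fun c => sval (phi c))); split; last first.
  by move=> a b; rewrite psi_eta -phi_tau.
by split=> //; move: (psi_eta pa_one); rewrite (eta_one HEF) phi_one.
Qed.

Lemma upog_iso_tensor_Gr : upog_iso T GrEF.
Proof.
have [[t_addl t_addr] [t_univ [_ t_one]]] := Ht.
have [beta [beta_biadd beta_pos beta_eta]] := tensor_Gr_bimorphism.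
have [Th [[Th_add Th_t] _]] := t_univ GrEF beta beta_biadd.
have Th_pos : forall x, pog_pos x -> pog_pos (Th x).
  by apply: (upog_tensor_hom_pos Ht Th_add) => p q p_pos q_pos; rewrite -Th_t; apply: beta_pos.
have Th_one : Th ounit = ounit.
  by rewrite t_one -Th_t -(eta_one HE) -(eta_one HF) beta_eta (proj1 (proj1 Htau)) eta_one.
have Th_hom : upog_hom Th by [].
have [psi [psi_hom psi_tau]] := Gr_tensor_to_tensor_Gr.
have [[psi_add psi_pos] _] := psi_hom.
have Th_psi_eta : gamma_map Th_hom \o gamma_map psi_hom \o etaEF = etaEF.
  apply: (ea_tensor_hom_eq (L := GammaEA (ounit_pos GrEF)) Htau) => [||a b].
  - by apply: ea_hom_comp (ug_hom HEF) _; apply: ea_hom_comp; apply: gamma_map_hom.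
  - exact: ug_hom HEF.
  - by apply: sval_inj; rewrite /= psi_tau -Th_t beta_eta.
have Th_psi : Th \o psi =1 id.
  apply: (ug_eq HEF) => // [x y|c]; first by rewrite /= psi_add Th_add.
  by rewrite -[in RHS]Th_psi_eta.
have psi_Th x : psi (Th x) = x.
  apply: (upog_tensor_hom_eq Ht (g1 := psi \o Th) (g2 := id)) => // {x} [x y|x y].
    by rewrite /= Th_add psi_add.
  rewrite /= -Th_t; apply: (ug_eq2 HE HF (k1 := fun x y => psi (beta x y))) => // {x y}.
    by case: beta_biadd => addl addr; split=> [y|x] x1 x2; rewrite /= ?addl ?addr psi_add.
  by move=> a b; rewrite beta_eta psi_tau.
exists Th; split=> //; split; first by exists psi.
by split=> // x; split=> [/Th_pos // | /psi_pos]; rewrite psi_Th.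
Qed.

End TensorOfUniversalGroups.

Section MapsInterval.
Variables (E : EA) (G B : UPOG) (eta : E -> GammaU G) (HE : is_universal_group eta)
  (h : G -> B) (hh : upog_hom h).

Lemma maps_liftP f : mapsP eta h f ->
  po_hom (ug_lift eta f) /\ forall a, ug_lift eta f (sval (eta a)) = f a.
Proof. by move=> [f_bound [_ f_add]]; apply: (ug_liftP HE) => // a; case: (f_bound a). Qed.

Lemma maps_lift_interval f : mapsP eta h f -> intervalP h (ug_lift eta f).
Proof.
move=> f_maps; have [[g_add g_pos] g_eta] := maps_liftP f_maps.
have [[h_add _] _] := hh.
split=> //; split=> //; apply: (ug_pos HE (k := fun x => h x - ug_lift eta f x)).
  by move=> x y; rewrite h_add g_add opprD addrACA.
by move=> a; rewrite g_eta; have [_ [_ f_le]] := proj1 f_maps a.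
Qed.

Lemma interval_comp_maps g : intervalP h g -> mapsP eta h (fun a => g (sval (eta a))).
Proof.
move=> [g_add [g_pos g_le]]; have [[h_add h_pos] h_one] := hh.
split; last split.
- move=> a; have [a_pos a_le] := svalP (eta a).
  split; first exact: g_pos.
  split; last exact: g_le.
  have -> : ounit - g (sval (eta a)) =
            (h (sval (eta a)) - g (sval (eta a))) + h (ounit - sval (eta a)).
    by rewrite (zaddB _ _ h_add) h_one [in RHS]addrC addrA subrK.
  by apply: pog_posD; [apply: g_le | apply: h_pos].
- by rewrite (eta_zero (ug_hom HE)) zadd0.
- by move=> a b c abc; rewrite -g_add (eta_additive HE abc).
Qed.

Lemma ea_iso_EAmaps_GammaHom : ea_iso (EAmaps (ug_hom HE) hh) (GammaHom hh).
Proof.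
have [[h_add _] _] := hh.
pose Psi (f : EAmaps (ug_hom HE) hh) : GammaHom hh :=
  exist _ _ (maps_lift_interval (svalP f)).
pose Phi (g : GammaHom hh) : EAmaps (ug_hom HE) hh :=
  exist _ _ (interval_comp_maps (svalP g)).
have Psi_add f : zadditive (sval (Psi f)) := (maps_liftP (svalP f)).1.1.
have Psi_eta f a : sval (Psi f) (sval (eta a)) = sval f a := (maps_liftP (svalP f)).2 a.
exists Psi; split; [exists Phi|split].
- by move=> f; apply: sval_inj; apply: functional_extensionality => a; apply: Psi_eta.
- move=> g; apply: sval_inj; apply: functional_extensionality.
  by apply: (ug_eq HE (Psi_add _) (proj1 (svalP g))) => a; apply: Psi_eta.
- apply: sval_inj; apply: functional_extensionality.
  by apply: (ug_eq HE (Psi_add _) h_add) => a; apply: Psi_eta.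
- move=> f1 f2 f3; split=> /= f12_3; last by move=> a; rewrite -!Psi_eta f12_3.
  apply: (ug_eq HE (k1 := fun x => sval (Psi f1) x + sval (Psi f2) x) _ (Psi_add f3)).
    by move=> x y; rewrite !Psi_add addrACA.
  by move=> a; rewrite !Psi_eta.
Qed.

End MapsInterval.

Theorem theorem5p1
  (E F : EA)
  (GrE : UPOG) (etaE : E -> GammaU GrE) (HE : is_universal_group etaE)
  (GrF : UPOG) (etaF : F -> GammaU GrF) (HF : is_universal_group etaF)
  (EF : EA) (tau : E -> F -> EF) (Htau : is_ea_tensor tau)
  (GrEF : UPOG) (etaEF : EF -> GammaU GrEF) (HEF : is_universal_group etaEF)
  (T : UPOG) (t : GrE -> GrF -> T) (Ht : is_upog_tensor t)
  (B : UPOG) (h : GrE -> B) (hh : upog_hom h) :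
  upog_iso T GrEF /\
  ea_iso (EAmaps (ug_hom HE) hh) (GammaHom hh).
Proof.
split; [exact: (upog_iso_tensor_Gr HE HF Htau HEF Ht) | exact: ea_iso_EAmaps_GammaHom].
Qed.
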